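(* Under the Kahan map $\mathcal K$ with step size $2\epsilon$ of the generalized Lotka–Volterra system, the functions $v_j$ transform as $\tilde v_j=v_j\dfrac{1+\epsilon H}{1-\epsilon H+2\epsilon v_j}$ for $j=1,\dots,n$, where $\tilde v_j:=a_1\tilde x_1+\dots+a_j\tilde x_j$; in particular $\tilde H=H$.
   Context: $(a_1,\dots,a_n)\in\mathbb R^n\setminus\{0\}$, $H=a_1x_1+\dots+a_nx_n$, $v_0:=0$, $v_i:=a_1x_1+\dots+a_ix_i$. The Kahan map with step size $2\epsilon$ is the map $x\mapsto\tilde x$ implicitly defined by $\tilde x_i-x_i=\epsilon\,x_i(H-\tilde v_i-\tilde v_{i-1})+\epsilon\,\tilde x_i(H-v_i-v_{i-1})$ ($i=1,\dots,n$), with $\tilde v_i$ as defined and $\tilde v_0=0$; this is the Kahan discretization (with step $2\epsilon$) of $\dot x_i=x_i(H-v_i-v_{i-1})$, which equals $\dot x_i=x_i\big(\sum_{j>i}a_jx_j-\sum_{j<i}a_jx_j\big)$. *)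

From HB Require Import structures.
From mathcomp Require Import all_boot all_order all_algebra.
Set Implicit Arguments. Unset Strict Implicit. Unset Printing Implicit Defensive.
Import Order.TTheory GRing.Theory Num.Theory.
Local Open Scope ring_scope.

(* Coordinates are indexed 0-based by 'I_n: the paper's x_{i} is x (i-1).
   vpref a x m = a_1 x_1 + ... + a_m x_m  (the paper's v_m), with v_0 = 0. *)
Definition vpref (R : nzRingType) (n : nat) (a x : 'I_n -> R) (m : nat) : R :=
  \sum_(k < n | (k < m)%N) a k * x k.

Definition Hfun (R : nzRingType) (n : nat) (a x : 'I_n -> R) : R := vpref a x n.

(* The implicit equations defining the Kahan map x |-> xt with step 2*eps:
   xt_i - x_i = eps x_i (H - vt_i - vt_{i-1}) + eps xt_i (H - v_i - v_{i-1}),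
   for the paper's i = (0-based i) + 1. *)
Definition kahan_eqs (R : nzRingType) (n : nat) (a : 'I_n -> R) (eps : R)
    (x xt : 'I_n -> R) : Prop :=
  forall i : 'I_n,
    xt i - x i =
      eps * x i * (Hfun a x - vpref a xt i.+1 - vpref a xt i)
    + eps * xt i * (Hfun a x - vpref a x i.+1 - vpref a x i).

(* Cross-multiplied, the claim reads vt_j (1 - eps H + 2 eps v_j) = v_j (1 + eps H).
   This holds for j = 0 trivially, and passing from j - 1 to j adds a_j x_j to v and
   a_j xt_j to vt: the difference of the two sides changes by exactly a_j times the
   j-th Kahan equation, so the identity propagates by induction. For j = n we have
   v_n = H, the denominator becomes 1 + eps H, and hence vt_n = H. *)
From HB Require Import structures.
From mathcomp Require Import all_boot all_order all_algebra.
From mathcomp Require Import ring.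
Import Order.TTheory GRing.Theory Num.Theory.
Set Implicit Arguments.
Local Open Scope ring_scope.

Lemma vpref0 (R : nzRingType) n (a x : 'I_n -> R) : vpref a x 0 = 0.
Proof. by rewrite /vpref big1 // => k; rewrite ltn0. Qed.

Lemma vprefS (R : nzRingType) n (a x : 'I_n -> R) (i : 'I_n) :
  vpref a x i.+1 = vpref a x i + a i * x i.
Proof.
rewrite /vpref (bigD1 i) ?ltnSn //= addrC; congr (_ + _).
by apply: eq_bigl => k; rewrite ltnS [(k < i)%N]ltn_neqAle andbC.
Qed.

Lemma kahan_cross_step (R : comNzRingType) (eps H v w p q : R) :
  q - p = eps * p * (H - (w + q) - w) + eps * q * (H - (v + p) - v) ->
  w * (1 - eps * H + 2 * eps * v) = v * (1 + eps * H) ->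
  (w + q) * (1 - eps * H + 2 * eps * (v + p)) = (v + p) * (1 + eps * H).
Proof.
move=> step IH; apply/eqP; rewrite -subr_eq0.
have -> : (w + q) * (1 - eps * H + 2 * eps * (v + p)) - (v + p) * (1 + eps * H)
  = (w * (1 - eps * H + 2 * eps * v) - v * (1 + eps * H))
    + ((q - p) - (eps * p * (H - (w + q) - w) + eps * q * (H - (v + p) - v))) by ring.
by rewrite IH step !subrr addr0.
Qed.

Lemma kahan_vpref_cross (R : comNzRingType) n (a : 'I_n -> R) (eps : R)
    (x xt : 'I_n -> R) :
  kahan_eqs a eps x xt -> forall m, (m <= n)%N ->
  vpref a xt m * (1 - eps * Hfun a x + 2 * eps * vpref a x m)
    = vpref a x m * (1 + eps * Hfun a x).
Proof.
move=> kahan; elim=> [|m IH] lt_mn; first by rewrite !vpref0 !mul0r.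
pose i := Ordinal lt_mn.
rewrite (@vprefS _ _ a x i) (@vprefS _ _ a xt i).
apply: kahan_cross_step; last exact/IH/ltnW.
rewrite -!vprefS -mulrBr (kahan i) /=; ring.
Qed.

Theorem mainTheorem7 (R : realFieldType) (n : nat) (a : 'I_n -> R)
    (eps : R) (x xt : 'I_n -> R) :
  (exists i : 'I_n, a i != 0) ->
  kahan_eqs a eps x xt ->
  (forall j : nat, (1 <= j <= n)%N ->
     1 - eps * Hfun a x + 2 * eps * vpref a x j != 0) ->
  (forall j : nat, (1 <= j <= n)%N ->
     vpref a xt j =
       vpref a x j * (1 + eps * Hfun a x)
         / (1 - eps * Hfun a x + 2 * eps * vpref a x j))
  /\ Hfun a xt = Hfun a x.
Proof.
move=> [i0 _] kahan denom_neq0.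
have vt_formula j : (1 <= j <= n)%N -> vpref a xt j
    = vpref a x j * (1 + eps * Hfun a x)
        / (1 - eps * Hfun a x + 2 * eps * vpref a x j).
  move=> /[dup] /andP[_ le_jn] /denom_neq0 nz.
  by rewrite -(kahan_vpref_cross kahan _ le_jn) mulfK.
split=> //.
have range_n : (1 <= n <= n)%N by rewrite leqnn andbT (leq_ltn_trans _ (ltn_ord i0)).
move: (denom_neq0 n range_n); rewrite /Hfun (vt_formula n range_n) /Hfun.
have -> : 1 - eps * vpref a x n + 2 * eps * vpref a x n = 1 + eps * vpref a x n
  by ring.
by move/mulfK.
Qed.
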